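(* Let $\alpha,\beta$ be sets, $z\in\beta$, $\mathit{seq}:\beta\times\alpha\to\beta$ and $\oplus:\beta\times\beta\to\beta$. Let $\Gamma=\{\mathrm{foldl}(\mathit{seq},z,L) : L \text{ a finite list over }\alpha\}$. Assume $\oplus$ is associative on $\Gamma$ and $z$ is an identity of $\oplus$ on $\Gamma$. Then the following are equivalent: (1) for all finite lists $p_1,p_2$ over $\alpha$, $\mathrm{foldl}(\mathit{seq},z,p_1\mathbin{+\!\!+}p_2)=\mathrm{foldl}(\mathit{seq},z,p_1)\oplus\mathrm{foldl}(\mathit{seq},z,p_2)$; (2) for all $d\in\alpha$ and $e\in\Gamma$, $\mathit{seq}(e,d)=e\oplus\mathit{seq}(z,d)$.
   Context: Lists are finite; $\mathbin{+\!\!+}$ is list concatenation. For $f:B\times A\to B$, $b\in B$: $\mathrm{foldl}(f,b,[\,])=b$ and $\mathrm{foldl}(f,b,[x_1,\dots,x_n])=f(\cdots f(f(b,x_1),x_2)\cdots,x_n)$. *)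

From Stdlib Require Import List.
Import ListNotations.

Definition foldl {A B : Type} (f : B -> A -> B) (b : B) (L : list A) : B :=
  fold_left f L b.

Definition Gamma {A B : Type} (sq : B -> A -> B) (z : B) (e : B) : Prop :=
  exists L : list A, e = foldl sq z L.

From Stdlib Require Import List.
Import ListNotations.

Lemma foldl_snoc {A B : Type} (f : B -> A -> B) (b : B) (L : list A) (x : A) :
  foldl f b (L ++ [x]) = f (foldl f b L) x.
Proof. unfold foldl. rewrite fold_left_app. reflexivity. Qed.

Section FoldlMorphism.

Variables (A B : Type) (z : B) (sq : B -> A -> B) (op : B -> B -> B).

Lemma Gamma_foldl (L : list A) : Gamma sq z (foldl sq z L).
Proof. exists L. reflexivity. Qed.

Lemma step_of_foldl_app_morph :
  (forall p1 p2 : list A,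
      foldl sq z (p1 ++ p2) = op (foldl sq z p1) (foldl sq z p2)) ->
  forall (d : A) (e : B), Gamma sq z e -> sq e d = op e (sq z d).
Proof.
  intros Hmorph d e [L ->].
  rewrite <- foldl_snoc, Hmorph.
  reflexivity.
Qed.

Lemma foldl_app_morph_of_step
  (Hassoc : forall a b c, Gamma sq z a -> Gamma sq z b -> Gamma sq z c ->
              op (op a b) c = op a (op b c))
  (Hidr : forall a, Gamma sq z a -> op a z = a)
  (Hstep : forall (d : A) (e : B), Gamma sq z e -> sq e d = op e (sq z d)) :
  forall p1 p2 : list A,
    foldl sq z (p1 ++ p2) = op (foldl sq z p1) (foldl sq z p2).
Proof.
  intros p1 p2.
  induction p2 as [|d p2 IH] using rev_ind.
  - rewrite app_nil_r. symmetry. apply Hidr, Gamma_foldl.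
  - rewrite app_assoc, !foldl_snoc.
    rewrite (Hstep d (foldl sq z (p1 ++ p2))), (Hstep d (foldl sq z p2)), IH
      by apply Gamma_foldl.
    apply Hassoc; [apply Gamma_foldl | apply Gamma_foldl | exact (Gamma_foldl [d])].
Qed.

End FoldlMorphism.

Theorem lemma2 (A B : Type) (z : B) (sq : B -> A -> B) (op : B -> B -> B)
  (Hassoc : forall a b c, Gamma sq z a -> Gamma sq z b -> Gamma sq z c ->
              op (op a b) c = op a (op b c))
  (Hidl : forall a, Gamma sq z a -> op z a = a)
  (Hidr : forall a, Gamma sq z a -> op a z = a) :
  (forall p1 p2 : list A,
      foldl sq z (p1 ++ p2) = op (foldl sq z p1) (foldl sq z p2))
  <->
  (forall (d : A) (e : B), Gamma sq z e -> sq e d = op e (sq z d)).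
Proof.
  split.
  - apply step_of_foldl_app_morph.
  - apply foldl_app_morph_of_step; assumption.
Qed.
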